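(* Consider the SBCM with parameters $\gamma>0$ and $\delta\ge0$, and let $\mathbf{x}$ be a linearly stable steady state. Then for each persuadable node $i\in\mathcal{P}$ there exists a neighbor $j\sim i$ such that $$|x_i-x_j|\le\sqrt{\max\{\delta,\gamma^{-1}\}}.$$
   Context: Let $\mathcal{G}$ be a finite undirected unweighted graph without self-loops, with node set $\mathcal{N}$, adjacency written $i\sim j$, partitioned into zealots $\mathcal{Z}$ and persuadable nodes $\mathcal{P}=\mathcal{N}\setminus\mathcal{Z}$ (each persuadable node has at least one neighbor). The influence function is $w(x_i,x_j)=\frac{1}{1+e^{\gamma(x_i-x_j)^2-\gamma\delta}}$ if $i\sim j$ and $0$ otherwise. The SBCM is $\frac{dx_i}{dt}=f_i(\mathbf{x})=\frac{\sum_j w(x_i,x_j)(x_j-x_i)}{\sum_j w(x_i,x_j)}$ for $i\in\mathcal{P}$ and $\frac{dx_i}{dt}=0$ for $i\in\mathcal{Z}$. A steady state is $\mathbf{x}$ with all $f_i(\mathbf{x})=0$. It is linearly stable if all eigenvalues of $\mathbf{J}_{\mathcal{P}}=(\partial f_i/\partial x_j)_{i,j\in\mathcal{P}}$ at $\mathbf{x}$ are strictly negative. *)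

From HB Require Import structures.
From mathcomp Require Import all_boot all_order all_algebra.
From mathcomp Require Import all_classical all_reals all_analysis.
From mathcomp Require Import complex.

Set Implicit Arguments.
Unset Strict Implicit.
Unset Printing Implicit Defensive.

Import Order.TTheory GRing.Theory Num.Theory.
Local Open Scope ring_scope.

Section SBCM.
Variables (R : realType) (T : finType).

Definition sbcm_w (adj : rel T) (gamma delta : R) (x : T -> R) (i j : T) : R :=
  if adj i j then 1 / (1 + expR (gamma * (x i - x j) ^+ 2 - gamma * delta)) else 0.

(* The SBCM vector field f_i(x); zealots have f_i = 0. *)
Definition sbcm_f (adj : rel T) (Z : {set T}) (gamma delta : R) (x : T -> R) (i : T) : R :=
  if i \in Z then 0
  else (\sum_j sbcm_w adj gamma delta x i j * (x j - x i)) /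
       (\sum_j sbcm_w adj gamma delta x i j).

Definition steady_state adj Z gamma delta (x : T -> R) : Prop :=
  forall i, sbcm_f adj Z gamma delta x i = 0.

Definition upd (x : T -> R) (j : T) (t : R) : T -> R :=
  fun k => if k == j then t else x k.

Definition sbcm_partial adj Z gamma delta (x : T -> R) (i j : T) : R :=
  derive1 (fun t => sbcm_f adj Z gamma delta (upd x j t) i) (x j).

(* Jacobian restricted to the persuadable nodes P = ~: Z, indexed by 'I_#|P| *)
Definition jacP adj (Z : {set T}) gamma delta (x : T -> R) : 'M[R]_#|~: Z| :=
  \matrix_(a, b) sbcm_partial adj Z gamma delta x
                   (enum_val a) (enum_val b).

(* linearly stable: all (complex) eigenvalues of J_P are strictly negative reals *)
Definition linearly_stable adj Z gamma delta (x : T -> R) : Prop :=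
  steady_state adj Z gamma delta x /\
  forall z : R[i],
    eigenvalue (map_mx (real_complex R) (jacP adj Z gamma delta x)) z -> z < 0.

End SBCM.

From HB Require Import structures.
From mathcomp Require Import all_boot all_order all_algebra.
From mathcomp Require Import all_classical all_reals all_analysis.
From mathcomp Require Import complex.
From mathcomp Require Import ring lra.

(* At a steady state the numerator of f_i vanishes, so the Jacobian is
   J = D^-1 L, where D_ii = sum_j w(x_i, x_j) > 0 and L is the symmetric matrix
   with L_ij = c(x_j - x_i) for j ~ i and L_ii = - sum_(k ~ i) c(x_k - x_i),
   c being the derivative of the flux u |-> w(u) u.  As J is similar to the
   symmetric matrix D^-1/2 L D^-1/2, negative eigenvalues of J force L_ii < 0,
   i.e. sum_(k ~ i) c(x_k - x_i) > 0.  But c(u) < 0 as soon as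
   u^2 > max(delta, 1/gamma), so some neighbour of i lies within that
   distance. *)

Set Implicit Arguments.
Unset Strict Implicit.
Unset Printing Implicit Defensive.

Import Order.TTheory GRing.Theory Num.Theory.
Local Open Scope ring_scope.

Section NegativeSpectrum.
Local Open Scope sesquilinear_scope.
Local Open Scope complex_scope.

Lemma eigenvalue_similar (F : fieldType) n (P A B : 'M[F]_n) :
  P \in unitmx -> P *m A = B *m P -> {subset eigenvalue B <= eigenvalue A}.
Proof.
move=> Punit PA; have -> : B = conjmx P A by rewrite conjumx // PA mulmxK.
by apply: eigenvalue_conjmx; rewrite ?stablemx_unit ?row_free_unit.
Qed.

Lemma eigenvalue_diag_mx (F : fieldType) n (d : 'rV[F]_n) k :
  eigenvalue (diag_mx d) (d 0 k).
Proof.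
apply/eigenvalueP; exists 'e_k; first by rewrite -rowE row_diag_mx.
apply/negP => /eqP/matrixP/(_ 0 k).
by rewrite !mxE !eqxx => /eqP; rewrite oner_eq0.
Qed.

Lemma eigenvalue_spectral_diag (C : numClosedFieldType) n (S : 'M[C]_n) k :
  S \is normalmx -> eigenvalue S (spectral_diag S 0 k).
Proof.
have Punit := spectral_unit S.
move=> /orthomx_spectralP; set P := spectralmx S; set D := diag_mx _ => Sdec.
have PS : P *m S = D *m P by rewrite Sdec !mulmxA mulmxV // mul1mx.
exact: eigenvalue_similar Punit PS _ (eigenvalue_diag_mx _ k).
Qed.

Lemma convex_comb_lt0 (R : numDomainType) (I : finType) (l w : I -> R) :
  (forall k, l k < 0) -> (forall k, 0 <= w k) -> \sum_k w k = 1 ->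
  \sum_k l k * w k < 0.
Proof.
move=> l_lt0 w_ge0 w_sum1.
have [k /andP[_ wk_gt0]] : exists k, true && (0 < w k).
  apply: psumr_neq0P => [k _|]; first exact: w_ge0.
  by rewrite w_sum1; apply/eqP; rewrite oner_neq0.
rewrite (bigD1 k) //= ltr_nwDl ?nmulr_rlt0 //.
by apply: sumr_le0 => j _; rewrite nmulr_rle0.
Qed.

Lemma hermitian_diag_lt0 (C : numClosedFieldType) n (S : 'M[C]_n) :
  S \is hermsymmx -> (forall z, eigenvalue S z -> z < 0) -> forall a, S a a < 0.
Proof.
move=> /hermitian_normalmx Snormal eig_lt0 a.
have Punitary := spectral_unitarymx S.
have lam_lt0 k : spectral_diag S 0 k < 0.
  exact/eig_lt0/eigenvalue_spectral_diag.
move: Snormal => /orthomx_spectralP; set P := spectralmx S => ->.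
have PtP : P^t* *m P = 1%:M by rewrite -invmx_unitary ?mulVmx ?unitarymx_unit.
rewrite invmx_unitary // mul_mx_diag !mxE.
under eq_bigr => k _ do rewrite !mxE mulrAC -normCKC mulrC.
apply: convex_comb_lt0 => [//|k|]; first exact: exprn_ge0.
have /matrixP/(_ a a) := PtP; rewrite !mxE eqxx mulr1n => <-.
by apply: eq_bigr => k _; rewrite !mxE normCKC.
Qed.

Lemma scaled_symmetric_diag_lt0 (R : rcfType) n (A M : 'M[R]_n)
    (d : 'I_n -> R) :
  (forall a, 0 < d a) -> M^T = M -> (forall a b, A a b = M a b / d a) ->
  (forall z, eigenvalue (map_mx (real_complex R) A) z -> z < 0) ->
  forall a, M a a < 0.
Proof.
move=> d_gt0 Msym AE eig_lt0 a.
pose s b := Num.sqrt (d b).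
have s_gt0 b : 0 < s b by rewrite sqrtr_gt0.
have ss b : s b * s b = d b by rewrite -expr2 sqr_sqrtr // ltW.
pose S := map_mx (real_complex R) (\matrix_(b, c) (M b c / (s b * s c))).
pose Ds := diag_mx (\row_b (s b)%:C).
have Ds_unit : Ds \in unitmx.
  rewrite unitmxE det_diag unitfE; apply/prodf_neq0 => b _.
  by rewrite mxE eq_complex /= eqxx andbT gt_eqF.
have DsA : Ds *m map_mx (real_complex R) A = S *m Ds.
  rewrite mul_diag_mx mul_mx_diag; apply/matrixP => b c; rewrite !mxE AE.
  rewrite -!rmorphM /= -ss; congr _%:C; field.
  by rewrite !gt_eqF.
have S_herm : S \is hermsymmx.
  apply: realsym_hermsym.
    rewrite is_hermitianmxE expr0 scale1r; apply/eqP/matrixP => b c.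
    by rewrite !mxE -[in RHS]Msym !mxE /idfun (mulrC (s c)).
  by apply/mxOverP => b c; rewrite mxE realE -[0]/(0%:C) !lecR -realE num_real.
have S_eig_lt0 z : eigenvalue S z -> z < 0.
  by move=> Sz; apply/eig_lt0/(eigenvalue_similar Ds_unit DsA).
have := hermitian_diag_lt0 S_herm S_eig_lt0 a.
by rewrite !mxE -[0]/(0%:C) ltcR pmulr_llt0 // invr_gt0 mulr_gt0.
Qed.

End NegativeSpectrum.

Section Influence.
Variables (R : realType) (gamma delta : R).

Definition influence (u : R) : R :=
  1 / (1 + expR (gamma * u ^+ 2 - gamma * delta)).

(* w' = - w^2 E (2 gamma u) with E the exponential, and w E = 1 - w. *)
Definition influence_slope (u : R) : R :=
  - (2 * gamma * u) * influence u * (1 - influence u).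

Definition flux (u : R) : R := influence u * u.

Definition flux_slope (u : R) : R := influence u + u * influence_slope u.

Lemma influence_gt0 u : 0 < influence u.
Proof. by rewrite divr_gt0 // ltr_wpDr // expR_ge0. Qed.

Lemma influenceN u : influence (- u) = influence u.
Proof. by rewrite /influence sqrrN. Qed.

Lemma is_derive_influence (u : R) : is_derive u 1 influence (influence_slope u).
Proof.
pose E s := 1 + expR (gamma * s ^+ 2 - gamma * delta).
have E_neq0 : E u != 0 by rewrite gt_eqF // ltr_wpDr // expR_ge0.
have dE : is_derive u 1 E
    (expR (gamma * u ^+ 2 - gamma * delta) * (2 * gamma * u)).
  by apply: is_derive_eq; rewrite /GRing.scale /=; ring.
have -> : influence = fun s => (E s)^-1.
  by apply/funext => s; rewrite /influence div1r.
apply: is_derive_eq; rewrite /influence_slope /influence /GRing.scale /=.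
by rewrite /E in E_neq0 *; field.
Qed.

Lemma is_derive_flux (u : R) : is_derive u 1 flux (flux_slope u).
Proof.
apply: is_derive_eq (is_deriveM (is_derive_influence u) (is_derive_id u 1)) _.
by rewrite /flux_slope /GRing.scale /=; ring.
Qed.

Lemma flux_slopeN u : flux_slope (- u) = flux_slope u.
Proof. by rewrite /flux_slope /influence_slope influenceN; ring. Qed.

Lemma flux_slope_lt0 u : 0 < gamma ->
  Num.sqrt (Num.max delta gamma^-1) < `|u| -> flux_slope u < 0.
Proof.
move=> gamma_gt0 u_far.
have u2_gt0 : 0 < u ^+ 2.
  rewrite -real_normK ?num_real // exprn_gt0 //.
  exact: le_lt_trans (sqrtr_ge0 _) u_far.
move: u_far; rewrite -sqrtr_sqr ltr_sqrt // gt_max => /andP[delta_lt gamma_lt].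
have E_gt1 : 1 < expR (gamma * u ^+ 2 - gamma * delta).
  by rewrite -expR0 ltr_expR -mulrBr mulr_gt0 // subr_gt0.
have gu_gt1 : 1 < gamma * u ^+ 2.
  by rewrite -(mulfV (lt0r_neq0 gamma_gt0)) ltr_pM2l.
have w_lt_half : influence u < 2^-1.
  by rewrite /influence div1r ltf_pV2 ?posrE; lra.
have -> : flux_slope u =
    influence u * (1 - 2 * (gamma * u ^+ 2) * (1 - influence u)).
  by rewrite /flux_slope /influence_slope; ring.
by rewrite pmulr_rlt0 ?influence_gt0 // subr_lt0; nra.
Qed.
End Influence.

Lemma is_derive_bigsum (R : realType) (I : finType) (P : pred I)
    (h : I -> R -> R) (dh : I -> R) (t : R) :
  (forall k, P k -> is_derive t 1 (h k) (dh k)) ->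
  is_derive t 1 (fun s => \sum_(k | P k) h k s) (\sum_(k | P k) dh k).
Proof.
move=> dh_k.
have -> : (fun s => \sum_(k | P k) h k s) = \sum_(k | P k) h k.
  by apply/funext => s; rewrite fct_sumE.
elim/big_rec2: _ => [|k dy y Pk IH]; first exact: is_derive_cst.
exact: is_deriveD (dh_k k Pk) IH.
Qed.

Lemma derive1_div_root (R : realType) (N D : R -> R) (t n d : R) :
  is_derive t 1 N n -> is_derive t 1 D d -> N t = 0 -> D t != 0 ->
  derive1 (fun s => N s / D s) t = n / D t.
Proof.
move=> dN dD Nt0 Dt_neq0.
have -> : (fun s => N s / D s) = N * (fun s => (D s)^-1) by [].
have dND := is_deriveM dN (is_deriveV Dt_neq0 dD).
by rewrite derive1E derive_val Nt0 scale0r add0r /GRing.scale /= mulrC.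
Qed.

Section SteadyStateJacobian.
Variables (R : realType) (T : finType) (adj : rel T) (Z : {set T}).
Variables (gamma delta : R) (x : T -> R).

Lemma sbcm_wE (z : T -> R) i k :
  sbcm_w adj gamma delta z i k =
  if adj i k then influence gamma delta (z k - z i) else 0.
Proof. by rewrite /sbcm_w -/(influence gamma delta _) -opprB influenceN. Qed.

Definition total_influence i := \sum_k sbcm_w adj gamma delta x i k.

Definition flux_laplacian i j :=
  \sum_(k | adj i k)
    flux_slope gamma delta (x k - x i) * ((k == j)%:R - (i == j)%:R).

Lemma total_influence_gt0 i : (exists j, adj i j) -> 0 < total_influence i.
Proof.
move=> [j ij]; rewrite /total_influence (bigD1 j) //= sbcm_wE ij.
rewrite ltr_pwDl ?influence_gt0 //; apply: sumr_ge0 => k _.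
by rewrite sbcm_wE; case: (adj i k) => //; exact/ltW/influence_gt0.
Qed.

Lemma sbcm_partial_steady i j :
  i \notin Z -> steady_state adj Z gamma delta x -> 0 < total_influence i ->
  sbcm_partial adj Z gamma delta x i j = flux_laplacian i j / total_influence i.
Proof.
move=> iP steady D_gt0.
pose e k : R := (k == j)%:R - (i == j)%:R.
pose y k t := x k - x i + e k * (t - x j).
have y_upd t k : upd x j t k - upd x j t i = y k t.
  rewrite /upd /y /e.
  by case: (k =P j) => [->|_]; case: (i =P j) => [->|_] /=; ring.
have y_xj k : y k (x j) = x k - x i by rewrite /y subrr mulr0 addr0.
pose N t := \sum_(k | adj i k) flux gamma delta (y k t).
pose D t := \sum_(k | adj i k) influence gamma delta (y k t).
have fE :
    (fun t => sbcm_f adj Z gamma delta (upd x j t) i) = fun t => N t / D t.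
  apply/funext => t; rewrite /sbcm_f (negbTE iP) /N /D.
  congr (_ / _); rewrite [RHS]big_mkcond; apply: eq_bigr => k _.
    by rewrite sbcm_wE y_upd; case: (adj i k); rewrite ?mul0r.
  by rewrite sbcm_wE y_upd.
have is_derive_y (f f' : R -> R) k :
    (forall u : R, is_derive u 1 f (f' u)) ->
    is_derive (x j) 1 (fun t => f (y k t)) (f' (x k - x i) * e k).
  move=> df; rewrite -y_xj.
  have dy : is_derive (x j) 1 (y k) (e k).
    by rewrite /y; apply: is_derive_eq; rewrite /GRing.scale /=; ring.
  exact: is_derive1_comp (df _) dy.
have dN : is_derive (x j) 1 N (flux_laplacian i j).
  by apply: is_derive_bigsum => k _; apply: is_derive_y; exact: is_derive_flux.
have dD : is_derive (x j) 1 D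
    (\sum_(k | adj i k) influence_slope gamma delta (x k - x i) * e k).
  apply: is_derive_bigsum => k _.
  by apply: is_derive_y; exact: is_derive_influence.
have Dxj : D (x j) = total_influence i.
  rewrite /D /total_influence big_mkcond; apply: eq_bigr => k _.
  by rewrite sbcm_wE y_xj.
have Nxj : N (x j) = 0.
  have := steady i; rewrite /sbcm_f (negbTE iP) -/(total_influence i) => /eqP.
  rewrite mulf_eq0 invr_eq0 (gt_eqF D_gt0) orbF => /eqP <-.
  rewrite /N big_mkcond; apply: eq_bigr => k _.
  by rewrite sbcm_wE y_xj; case: (adj i k); rewrite ?mul0r.
by rewrite /sbcm_partial fE (derive1_div_root dN dD) ?Dxj // gt_eqF.
Qed.

Hypothesis adj_irr : irreflexive adj.
Hypothesis adj_sym : symmetric adj.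

Lemma flux_laplacian_diag i :
  flux_laplacian i i = - \sum_(k | adj i k) flux_slope gamma delta (x k - x i).
Proof.
rewrite /flux_laplacian -sumrN; apply: eq_bigr => k ik.
have /negbTE-> : k != i by apply: contraTneq ik => ->; rewrite adj_irr.
by rewrite eqxx sub0r mulrN1.
Qed.

Lemma flux_laplacian_offdiag i j : i != j ->
  flux_laplacian i j =
  if adj i j then flux_slope gamma delta (x j - x i) else 0.
Proof.
move=> ij; rewrite /flux_laplacian (negbTE ij) big_mkcond (bigD1 j) //= big1.
  by rewrite eqxx subr0 mulr1 addr0.
by move=> k /negbTE kj; rewrite kj subrr mulr0; case: (adj i k).
Qed.

Lemma flux_laplacian_sym i j : flux_laplacian i j = flux_laplacian j i.
Proof.
have [->//|ij] := eqVneq i j.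
rewrite flux_laplacian_offdiag // flux_laplacian_offdiag 1?eq_sym // adj_sym.
by rewrite -[x j - x i]opprB flux_slopeN.
Qed.

End SteadyStateJacobian.

Theorem theorem2 (R : realType) (T : finType) (adj : rel T) (Z : {set T})
    (gamma delta : R) (x : T -> R)
    (adj_sym : symmetric adj) (adj_irr : irreflexive adj)
    (hP : forall i, i \notin Z -> exists j, adj i j)
    (hgamma : 0 < gamma) (hdelta : 0 <= delta)
    (hstab : linearly_stable adj Z gamma delta x) :
  forall i, i \notin Z ->
    exists j, adj i j /\ `|x i - x j| <= Num.sqrt (Num.max delta gamma^-1).
Proof.
(* [hdelta] is unused: [flux_slope_lt0] holds for every [delta]. *)
move=> i iP; have [steady eig_lt0] := hstab.
have valP (a : 'I_#|~: Z|) : enum_val a \notin Z.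
  by have := enum_valP a; rewrite inE.
pose L : 'M[R]_#|~: Z| :=
  \matrix_(a, b) flux_laplacian adj gamma delta x (enum_val a) (enum_val b).
have L_sym : L^T = L by apply/matrixP => a b; rewrite !mxE flux_laplacian_sym.
pose D (a : 'I_#|~: Z|) := total_influence adj gamma delta x (enum_val a).
have D_gt0 a : 0 < D a by apply: total_influence_gt0; apply: hP (valP a).
have JE a b : jacP adj Z gamma delta x a b = L a b / D a.
  by rewrite !mxE sbcm_partial_steady ?valP ?D_gt0.
have iZ : i \in ~: Z by rewrite inE.
have := scaled_symmetric_diag_lt0 D_gt0 L_sym JE eig_lt0 (enum_rank_in iZ i).
rewrite mxE enum_rankK_in // flux_laplacian_diag // oppr_lt0 => slopes_gt0.
have /existsP[k /andP[ik slope_ge0]] :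
    [exists k, adj i k && (0 <= flux_slope gamma delta (x k - x i))].
  apply: contraTT slopes_gt0 => /existsPn none; rewrite -leNgt.
  by apply: sumr_le0 => k ik; move: (none k); rewrite ik /= -ltNge => /ltW.
exists k; split => //; rewrite leNgt; apply: contraL slope_ge0 => far.
by rewrite -ltNge flux_slope_lt0 // distrC.
Qed.
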